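(* Let $p\ge2$, $\mathcal K>0$ and $b(\xi)=\mathcal K|\xi|^{p-2}\xi$ on $\mathbb{R}^{Nn}$. Then for all $\xi,\xi_o,G\in\mathbb{R}^{Nn}$ and every invertible $\Psi\in\mathbb{R}^{n\times n}$, $$\big|b(\xi\Psi)-b(\xi_o\Psi)-\big[b((\xi+G)\Psi)-b((\xi_o+G)\Psi)\big]\big|\le c\,|G|\big(|\xi_o|^2+|\xi-\xi_o|^2+|G|^2\big)^{\frac{p-3}2}|\xi-\xi_o|$$ with a constant $c=c(p,\mathcal K,|\Psi|,|\Psi^{-1}|)$. *)

From HB Require Import structures.
From mathcomp Require Import all_boot all_order all_algebra.
From mathcomp Require Import reals exp.
Set Implicit Arguments. Unset Strict Implicit. Unset Printing Implicit Defensive.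
Import Order.TTheory GRing.Theory Num.Theory.
Local Open Scope ring_scope.

Definition frob (R : realType) (m n : nat) (A : 'M[R]_(m, n)) : R :=
  Num.sqrt (\sum_(i < m) \sum_(j < n) A i j ^+ 2).

Definition bfield (R : realType) (p K : R) (N n : nat) (xi : 'M[R]_(N, n))
  : 'M[R]_(N, n) := (K * powR (frob xi) (p - 2)) *: xi.

From HB Require Import structures.
From mathcomp Require Import all_boot all_order all_algebra.
From mathcomp Require Import boolp classical_sets reals topology normedtype derive exp.
From mathcomp Require Import ring lra.
Import Order.TTheory GRing.Theory Num.Theory.
Import numFieldNormedType.Exports.
Local Open Scope classical_set_scope.
Local Open Scope ring_scope.

(* Write phi_r(X) = |X|^r X (normpow r) with r = p - 2, so that b = K phi_r and the left-hand
   side is K times the mixed second difference of phi_r at B = xi_o Psi in the directions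
   D = (xi - xi_o) Psi and H = G Psi; the norms of B, D, H are comparable to those of xi_o,
   xi - xi_o, G up to |Psi| and |Psi^-1|.  As phi_r is homogeneous of degree r + 1, it suffices
   to bound the second difference by C |D| |H| when |B|^2 + |D|^2 + |H|^2 = 1.  If |D| or |H| is
   at least 1/16, this follows from the first-order bound
   |phi_r(X) - phi_r(Y)| <= (1 + 2r) rho^r |X - Y| on the ball of radius rho = 3.  Otherwise all
   four points have norm close to 1, where phi_r(X) = f(|X|^2) X with f(s) = s^(r/2) smooth, and
   the second difference splits into first and second differences of f, which the mean value
   theorem bounds. *)

Lemma subrACA (V : zmodType) (a b c d : V) : a - b - (c - d) = a - c - (b - d).
Proof. by rewrite !opprB addrACA [RHS]addrACA [- c + _]addrC. Qed.

Section RealLemmas.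
Context {R : realType}.

Lemma is_derive_comp_shift (f : R -> R) (d u df : R) :
  is_derive (u + d) 1 f df -> is_derive u 1 (fun v => f (v + d)) df.
Proof.
move=> fd.
have sd : derivable (shift d : R -> R) u 1 by apply: ex_derive; exact: is_derive_shift.
have fd' : derivable f ((shift d : R -> R) u) 1 by exact: ex_derive.
have -> : (fun v => f (v + d)) = f \o shift d by [].
split.
  by apply/derivable1_diffP; apply: differentiable_comp; exact/derivable1_diffP.
rewrite -derive1E derive1_comp // !derive1E.
by rewrite derive_val (@derive_val _ _ _ _ _ _ _ (is_derive_shift _ _ _)) mulr1.
Qed.

Lemma lipschitz_of_derive_bound (f df : R -> R) (lo hi M : R) :
  (forall u, lo <= u <= hi -> is_derive u 1 f (df u)) ->
  (forall u, lo <= u <= hi -> `|df u| <= M) ->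
  forall s t, lo <= s <= hi -> lo <= t <= hi -> `|f s - f t| <= M * `|s - t|.
Proof.
move=> fd dfM s t.
wlog ts : s t / t <= s => [hwlog|].
  by have [/hwlog//|/ltW/hwlog h hs ht] := leP t s; rewrite distrC [`|s - t|]distrC h.
move=> /andP[ls hs] /andP[lt ht].
have in_lohi x : t <= x <= s -> lo <= x <= hi.
  by case/andP=> tx xs; rewrite (le_trans lt tx) (le_trans xs hs).
have fd' x : x \in `]t, s[%R -> is_derive x 1 f (df x).
  by rewrite in_itv /= => /andP[tx xs]; apply/fd/in_lohi; rewrite !ltW.
have fc : {within `[t, s], continuous f}.
  apply: derivable_within_continuous => x.
  by rewrite in_itv /= => /in_lohi/fd/(@ex_derive _ _ _ _ _ _ _).
have [c cts ->] := MVT_segment ts fd' fc.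
by rewrite normrM ler_wpM2r // dfM // in_lohi //; rewrite in_itv /= in cts.
Qed.

Definition powR_lip (q lo hi : R) := `|q| * (powR lo (q - 1) + powR hi (q - 1)).

Lemma powR_lip_ge0 (q lo hi : R) : 0 <= powR_lip q lo hi.
Proof. by rewrite mulr_ge0 ?addr_ge0 ?powR_ge0. Qed.

Lemma powR_le_add_ends (e lo hi x : R) : 0 < lo -> lo <= x <= hi ->
  powR x e <= powR lo e + powR hi e.
Proof.
move=> lo0 /andP[lx xh]; have x0 : 0 < x by exact: lt_le_trans lx.
have [e0|e0] := leP 0 e.
  rewrite -[X in X <= _]add0r lerD ?powR_ge0 //.
  by apply: ge0_ler_powR => //; rewrite nnegrE ltW // (lt_le_trans x0 xh).
rewrite -[X in X <= _]addr0 lerD ?powR_ge0 // -[e]opprK !(powRN _ (- e)).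
rewrite lef_pV2 ?posrE ?powR_gt0 //.
by apply: ge0_ler_powR; rewrite // ?nnegrE ?oppr_ge0 ?(ltW e0) ?(ltW lo0) ?(ltW x0).
Qed.

Lemma powR_lipschitz_itv (q lo hi s t : R) : 0 < lo ->
  lo <= s <= hi -> lo <= t <= hi ->
  `|powR s q - powR t q| <= powR_lip q lo hi * `|s - t|.
Proof.
move=> lo0; rewrite /powR_lip.
apply: (@lipschitz_of_derive_bound (fun v => powR v q) (fun v => q * powR v (q - 1))).
  by move=> u /andP[lu _]; apply: is_derive1_powR; exact: lt_le_trans lu.
by move=> u hu; rewrite normrM ler_wpM2l // ger0_norm ?powR_ge0 // powR_le_add_ends.
Qed.

Lemma powR_second_diff_itv (q lo hi s t d : R) : 0 < lo ->
  lo <= s <= hi -> lo <= t <= hi -> lo <= s + d <= hi -> lo <= t + d <= hi ->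
  `|powR (s + d) q - powR s q - (powR (t + d) q - powR t q)|
    <= `|q| * powR_lip (q - 1) lo hi * `|d| * `|s - t|.
Proof.
move=> lo0 hs ht hsd htd.
have between u : Num.min s t <= u <= Num.max s t -> lo <= u <= hi /\ lo <= u + d <= hi.
  move: hs ht hsd htd => /andP[? ?] /andP[? ?] /andP[? ?] /andP[? ?].
  rewrite ge_min le_max => /andP[].
  by case: (leP s t) => st; rewrite ?minEle ?maxEle => *; split; apply/andP; split; lra.
have ends : Num.min s t <= s <= Num.max s t /\ Num.min s t <= t <= Num.max s t.
  by rewrite ge_min le_max lexx ge_min le_max lexx !orbT.
have pos u : lo <= u -> 0 < u by move=> lu; exact: lt_le_trans lu.
apply: (@lipschitz_of_derive_bound (fun v => powR (v + d) q - powR v q)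
  (fun v => q * powR (v + d) (q - 1) - q * powR v (q - 1)));
  [move=> u /between[/andP[lu _] /andP[lud _]] | move=> u /between[hu hud] | by case: ends..].
  have shifted := @is_derive_comp_shift _ d u _ (is_derive1_powR q (pos _ lud)).
  exact: (@is_deriveB _ _ _ (fun v => powR (v + d) q) (fun v => powR v q) u 1 _ _ shifted
    (is_derive1_powR q (pos _ lu))).
rewrite -mulrBr normrM -mulrA ler_wpM2l // (_ : `|d| = `|(u + d) - u|).
  exact: powR_lipschitz_itv.
by rewrite addrC addKr.
Qed.

Lemma powR_second_diff_defect_itv (q lo hi a b a' b' : R) : 0 < lo ->
  lo <= a <= hi -> lo <= b <= hi -> lo <= a' <= hi -> lo <= b' <= hi ->
  lo <= b + (a' - a) <= hi ->
  `|powR a q - powR b q - (powR a' q - powR b' q)|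
    <= `|q| * powR_lip (q - 1) lo hi * `|a' - a| * `|a - b|
       + powR_lip q lo hi * `|b' - (b + (a' - a))|.
Proof.
move=> lo0 ha hb ha' hb' hbd.
have ha'' : lo <= a + (a' - a) <= hi by rewrite addrC subrK.
have -> : powR a q - powR b q - (powR a' q - powR b' q)
    = - (powR (a + (a' - a)) q - powR a q - (powR (b + (a' - a)) q - powR b q))
      + (powR b' q - powR (b + (a' - a)) q).
  by rewrite (addrC a) subrK; ring.
apply: le_trans (ler_normD _ _) _; rewrite normrN lerD //.
  exact: powR_second_diff_itv.
exact: powR_lipschitz_itv.
Qed.

Lemma powR_sqr_half (x r : R) : 0 <= x -> powR x r = powR (x ^+ 2) (r / 2).
Proof. by move=> x0; rewrite -powR_mulrn // -powRrM; congr powR; field. Qed.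

Lemma powR_sub_mul_le (r u v : R) : 0 <= r -> 0 <= v -> v <= u ->
  (powR u r - powR v r) * v <= 2 * r * powR u r * (u - v).
Proof.
move=> r0 v0 vu; have [->|v_neq0] := eqVneq v 0.
  by rewrite mulr0 subr0 !mulr_ge0 ?powR_ge0 //; lra.
have v_gt0 : 0 < v by rewrite lt_def v_neq0.
have u_gt0 : 0 < u by exact: lt_le_trans vu.
have times x : 0 < x -> powR x (r - 1) * x = powR x r.
  move=> x0; rewrite -{2}(powRr1 (ltW x0)) -powRD ?subrK //.
  by apply/implyP => _; rewrite gt_eqF.
have pv_le_pu : powR v r <= powR u r by apply: ge0_ler_powR; rewrite // ?nnegrE ?ltW.
have lip : powR u r - powR v r <= r * (powR v (r - 1) + powR u (r - 1)) * (u - v).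
  have := powR_lipschitz_itv r v u u v v_gt0; rewrite !lexx vu /= => /(_ isT isT).
  by rewrite /powR_lip !ger0_norm ?subr_ge0.
apply: le_trans (ler_wpM2r v0 lip) _.
have uv : powR u (r - 1) * v <= powR u r by rewrite -(times u u_gt0) ler_pM2l ?powR_gt0.
have -> : r * (powR v (r - 1) + powR u (r - 1)) * (u - v) * v
    = r * (powR v (r - 1) * v + powR u (r - 1) * v) * (u - v) by ring.
have -> : 2 * r * powR u r * (u - v) = r * (2 * powR u r) * (u - v) by ring.
by rewrite times // ler_wpM2r ?subr_ge0 // ler_wpM2l //; lra.
Qed.

Lemma powR_le_comparable (e x y a b : R) : 0 < x -> 0 < y -> 0 <= a -> 0 <= b ->
  x <= a * y -> y <= b * x -> powR x e <= (powR a e + powR b (- e)) * powR y e.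
Proof.
move=> x0 y0 a0 b0 xay ybx; rewrite mulrDl.
have [e0|e0] := leP 0 e.
  have : powR x e <= powR a e * powR y e.
    rewrite -(powRM _ a0 (ltW y0)).
    by apply: ge0_ler_powR; rewrite // ?nnegrE ?(ltW x0) ?(mulr_ge0 a0 (ltW y0)).
  by have := mulr_ge0 (powR_ge0 b (- e)) (powR_ge0 y e); lra.
have : powR y (- e) <= powR b (- e) * powR x (- e).
  rewrite -(powRM _ b0 (ltW x0)).
  by apply: ge0_ler_powR; rewrite // ?nnegrE ?oppr_ge0 ?(ltW e0) ?(ltW y0) ?(mulr_ge0 b0 (ltW x0)).
have inv z : powR z e = (powR z (- e))^-1 by rewrite -powRN opprK.
rewrite (inv x) (inv y); move: (powR_gt0 (- e) x0) (powR_gt0 (- e) y0).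
set X := powR x (- e); set Y := powR y (- e) => X0 Y0 YX.
have : X^-1 <= powR b (- e) / Y by rewrite ler_pdivlMr // mulrC ler_pdivrMr.
have : 0 <= powR a e * Y^-1 by rewrite mulr_ge0 ?powR_ge0 // invr_ge0 ltW.
lra.
Qed.

Lemma sqr_sum3_le (c x1 x2 x3 y1 y2 y3 : R) : 0 <= x1 -> 0 <= x2 -> 0 <= x3 ->
  x1 <= y1 * c -> x2 <= y2 * c -> x3 <= y3 * c ->
  x1 ^+ 2 + x2 ^+ 2 + x3 ^+ 2 <= c ^+ 2 * (y1 ^+ 2 + y2 ^+ 2 + y3 ^+ 2).
Proof.
have sqr_le x y : 0 <= x -> x <= y -> x ^+ 2 <= y ^+ 2 by move=> x0 xy; exact: ler_pM.
move=> /sqr_le h1 /sqr_le h2 /sqr_le h3 /h1 {}h1 /h2 {}h2 /h3 {}h3.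
by rewrite !exprMn in h1 h2 h3; lra.
Qed.

End RealLemmas.

Section Frobenius.
Context {R : realType}.

Lemma sqr_sum_mul_le (T : finType) (a b : T -> R) :
  (\sum_k a k * b k) ^+ 2 <= (\sum_k a k ^+ 2) * (\sum_k b k ^+ 2).
Proof.
set Sa := \sum_k a k ^+ 2; set Sb := \sum_k b k ^+ 2; set P := \sum_k a k * b k.
have Sb0 : 0 <= Sb by apply: sumr_ge0 => k _; exact: sqr_ge0.
have [Sb_gt0|] := ltP 0 Sb; last first.
  move=> Sb_le0; have /eqP : Sb = 0 by apply/eqP; rewrite eq_le Sb_le0 Sb0.
  rewrite /Sb psumr_eq0 => [/allP b0|k _]; last exact: sqr_ge0.
  have -> : P = 0.
    rewrite /P big1 // => k _; have /implyP/(_ isT) := b0 k (mem_index_enum k).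
    by rewrite sqrf_eq0 => /eqP ->; rewrite mulr0.
  by rewrite expr0n mulr_ge0 //= sumr_ge0 // => k _; exact: sqr_ge0.
have expand x y : \sum_k (x * a k - y * b k) ^+ 2 = x ^+ 2 * Sa - 2 * x * y * P + y ^+ 2 * Sb.
  by rewrite !mulr_sumr -sumrB -big_split /=; apply: eq_bigr => k _; ring.
have : 0 <= Sb * (Sb * Sa - P ^+ 2).
  have -> : Sb * (Sb * Sa - P ^+ 2) = Sb ^+ 2 * Sa - 2 * Sb * P * P + P ^+ 2 * Sb by ring.
  by rewrite -expand; apply: sumr_ge0 => k _; exact: sqr_ge0.
by rewrite pmulr_rge0 // subr_ge0 mulrC.
Qed.

Section FixedDims.
Context {N n : nat}.
Implicit Types A B D H : 'M[R]_(N, n).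

Definition mxdot A B := \sum_i \sum_j A i j * B i j.

Lemma frob_ge0 A : 0 <= frob A. Proof. exact: sqrtr_ge0. Qed.

Lemma frob_sqr A : frob A ^+ 2 = \sum_i \sum_j A i j ^+ 2.
Proof. by rewrite sqr_sqrtr // sumr_ge0 // => i _; rewrite sumr_ge0 // => j _; rewrite sqr_ge0. Qed.

Lemma frob_eq0 A : (frob A == 0) = (A == 0).
Proof.
apply/eqP/eqP => [|->]; last first.
  by rewrite /frob big1 ?sqrtr0 // => i _; rewrite big1 // => j _; rewrite mxE expr0n.
move/eqP; rewrite -sqrf_eq0 frob_sqr => /eqP A0; apply/matrixP => i j; rewrite mxE.
have row0 := @psumr_eq0P _ _ _ _ (fun i _ => sumr_ge0 _ (fun j _ => sqr_ge0 (A i j))) A0 i isT.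
apply/eqP; rewrite -sqrf_eq0; apply/eqP.
exact: (@psumr_eq0P _ _ _ _ (fun j _ => sqr_ge0 (A i j)) row0 j isT).
Qed.

Lemma frob_gt0 A : (0 < frob A) = (A != 0).
Proof. by rewrite lt_def frob_eq0 frob_ge0 andbT. Qed.

Lemma frob0 : frob (0 : 'M[R]_(N, n)) = 0.
Proof. by apply/eqP; rewrite frob_eq0. Qed.

Lemma mxdot_le A B : `|mxdot A B| <= frob A * frob B.
Proof.
have sqr_le : mxdot A B ^+ 2 <= frob A ^+ 2 * frob B ^+ 2.
  rewrite !frob_sqr /mxdot !pair_big /=.
  exact: (sqr_sum_mul_le _ (fun x => A x.1 x.2) (fun x => B x.1 x.2)).
by rewrite -ler_sqr ?nnegrE ?mulr_ge0 ?frob_ge0 // real_normK ?num_real // exprMn.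
Qed.

Lemma frobD_sqr A B : frob (A + B) ^+ 2 = frob A ^+ 2 + 2 * mxdot A B + frob B ^+ 2.
Proof.
rewrite !frob_sqr /mxdot mulr_sumr -!big_split /=; apply: eq_bigr => i _.
by rewrite mulr_sumr -!big_split /=; apply: eq_bigr => j _; rewrite !mxE; ring.
Qed.

Lemma frobD A B : frob (A + B) <= frob A + frob B.
Proof.
rewrite -ler_sqr ?nnegrE ?addr_ge0 ?frob_ge0 // frobD_sqr sqrrD lerD2r lerD2l mulr2n.
by have := ler_norm (mxdot A B); have := mxdot_le A B; lra.
Qed.

Lemma frobZ (t : R) A : frob (t *: A) = `|t| * frob A.
Proof.
rewrite /frob -sqrtr_sqr -sqrtrM ?sqr_ge0 // mulr_sumr; congr Num.sqrt.
by apply: eq_bigr => i _; rewrite mulr_sumr; apply: eq_bigr => j _; rewrite mxE exprMn.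
Qed.

Lemma frobN A : frob (- A) = frob A.
Proof. by rewrite -scaleN1r frobZ normrN1 mul1r. Qed.

Lemma frobB A B : frob (A - B) <= frob A + frob B.
Proof. by rewrite -(frobN B) frobD. Qed.

Lemma ler_frob_dist A B : `|frob A - frob B| <= frob (A - B).
Proof.
have := frobD (A - B) B; have := frobD (B - A) A.
by rewrite !subrK -[B - A]opprB frobN ler_norml; lra.
Qed.

Lemma frob_sqr_dist A B : `|frob A ^+ 2 - frob B ^+ 2| <= frob (A - B) * (frob A + frob B).
Proof.
rewrite subr_sqr normrM (ger0_norm (addr_ge0 (frob_ge0 _) (frob_ge0 _))).
by rewrite ler_wpM2r ?addr_ge0 ?frob_ge0 ?ler_frob_dist.
Qed.

Lemma frob_sqr_second_diff B D H :
  frob (B + D + H) ^+ 2 - frob (B + D) ^+ 2 - (frob (B + H) ^+ 2 - frob B ^+ 2) = 2 * mxdot D H.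
Proof.
rewrite !frob_sqr /mxdot mulr_sumr -!sumrB; apply: eq_bigr => i _.
by rewrite mulr_sumr -!sumrB; apply: eq_bigr => j _; rewrite !mxE; ring.
Qed.

End FixedDims.

Lemma frob_mulmx {m k n : nat} (A : 'M[R]_(m, k)) (P : 'M[R]_(k, n)) :
  frob (A *m P) <= frob A * frob P.
Proof.
rewrite -ler_sqr ?nnegrE ?mulr_ge0 ?frob_ge0 // exprMn !frob_sqr mulr_suml.
apply: ler_sum => i _; rewrite exchange_big /= mulr_sumr; apply: ler_sum => j _.
by rewrite mxE; exact: sqr_sum_mul_le.
Qed.

Lemma powR_sum3_frob_mulmx_le {N n : nat} (e : R) (Psi : 'M[R]_n) (X Y Z : 'M[R]_(N, n)) :
  Psi \in unitmx -> Z != 0 ->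
  powR (frob (X *m Psi) ^+ 2 + frob (Y *m Psi) ^+ 2 + frob (Z *m Psi) ^+ 2) e
    <= (powR (frob Psi ^+ 2) e + powR (frob (invmx Psi) ^+ 2) (- e))
       * powR (frob X ^+ 2 + frob Y ^+ 2 + frob Z ^+ 2) e.
Proof.
move=> Psi_unit Z_neq0.
have bwd (A : 'M[R]_(N, n)) : frob A <= frob (A *m Psi) * frob (invmx Psi).
  by rewrite -{1}(mulmxK Psi_unit A) frob_mulmx.
have sum_gt0 (x y z : R) : 0 < z -> 0 < x ^+ 2 + y ^+ 2 + z ^+ 2.
  by move=> z0; have := exprn_gt0 2 z0; have := sqr_ge0 x; have := sqr_ge0 y; lra.
have Z_gt0 : 0 < frob Z by rewrite frob_gt0.
have ZPsi_gt0 : 0 < frob (Z *m Psi).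
  by have := bwd Z; have := frob_ge0 (invmx Psi); nra.
apply: powR_le_comparable (sum_gt0 _ _ _ ZPsi_gt0) (sum_gt0 _ _ _ Z_gt0) _ _ _ _.
- exact: sqr_ge0.
- exact: sqr_ge0.
- by apply: sqr_sum3_le; solve [exact: frob_ge0 | exact: frob_mulmx].
- by apply: sqr_sum3_le; solve [exact: frob_ge0 | exact: bwd].
Qed.

End Frobenius.

Section SecondDifference.
Context {R : realType}.

Section Fixed.
Context {N n : nat}.
Implicit Types B D H X Y : 'M[R]_(N, n).

Definition normpow (r : R) X := powR (frob X) r *: X.

Definition second_diff (r : R) B D H :=
  normpow r (B + D) - normpow r B - (normpow r (B + D + H) - normpow r (B + H)).

Lemma normpowZ (r t : R) X : 0 < t -> normpow r (t *: X) = powR t (r + 1) *: normpow r X.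
Proof.
move=> t0; rewrite /normpow frobZ gtr0_norm // powRM ?(ltW t0) ?frob_ge0 // !scalerA.
rewrite powRD ?powRr1 ?(ltW t0) 1?mulrAC //.
by apply/implyP => _; rewrite gt_eqF.
Qed.

Lemma second_diffZ (r t : R) B D H : 0 < t ->
  second_diff r (t *: B) (t *: D) (t *: H) = powR t (r + 1) *: second_diff r B D H.
Proof. by move=> t0; rewrite /second_diff -!scalerDr !normpowZ // !scalerBr. Qed.

Lemma second_diffC (r : R) B D H : second_diff r B D H = second_diff r B H D.
Proof.
rewrite /second_diff (addrAC B D H) !opprB addrACA [RHS]addrACA.
by rewrite (addrC (normpow r (B + D))).
Qed.

Lemma scaler_second_diffE (a b c d : R) B D H :
  a *: (B + D) - b *: B - (c *: (B + D + H) - d *: (B + H))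
    = (a - b - (c - d)) *: (B + D) + (b - d) *: D - (c - d) *: H.
Proof. by apply/matrixP => i j; rewrite !mxE; ring. Qed.

Lemma second_diff0 (r : R) B D : second_diff r B D 0 = 0.
Proof. by rewrite /second_diff !addr0 subrr. Qed.

Lemma normpow_lipschitz (r rho : R) X Y : 0 <= r -> frob X <= rho -> frob Y <= rho ->
  frob (normpow r X - normpow r Y) <= (1 + 2 * r) * powR rho r * frob (X - Y).
Proof.
move=> r0; wlog YX : X Y / frob Y <= frob X => [hwlog Xrho Yrho|Xrho _].
  have [/hwlog->//|/ltW/hwlog] := leP (frob Y) (frob X).
  by rewrite -opprB frobN -[Y - X]opprB frobN; apply.
have -> : normpow r X - normpow r Y
    = powR (frob X) r *: (X - Y) + (powR (frob X) r - powR (frob Y) r) *: Y.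
  by rewrite /normpow scalerBr scalerBl addrA subrK.
apply: le_trans (frobD _ _) _; rewrite !frobZ !ger0_norm ?powR_ge0 //; last first.
  by rewrite subr_ge0; apply: ge0_ler_powR; rewrite // nnegrE frob_ge0.
have sub := powR_sub_mul_le r (frob X) (frob Y) r0 (frob_ge0 Y) YX.
have dist : frob X - frob Y <= frob (X - Y) := le_trans (ler_norm _) (ler_frob_dist X Y).
have pX0 := powR_ge0 (frob X) r.
have h1 : 2 * r * powR (frob X) r * (frob X - frob Y) <= 2 * r * powR (frob X) r * frob (X - Y).
  by rewrite ler_wpM2l // !mulr_ge0 //; lra.
have h2 : (1 + 2 * r) * powR (frob X) r * frob (X - Y) <= (1 + 2 * r) * powR rho r * frob (X - Y).
  have rho0 : 0 <= rho := le_trans (frob_ge0 X) Xrho.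
  apply: ler_wpM2r; first exact: frob_ge0.
  apply: ler_wpM2l; first lra.
  by apply: ge0_ler_powR; rewrite // nnegrE ?frob_ge0.
lra.
Qed.

Lemma second_diff_le_lipschitz (r : R) B D H :
  0 <= r -> frob B <= 1 -> frob D <= 1 -> frob H <= 1 ->
  frob (second_diff r B D H) <= 2 * (1 + 2 * r) * powR 3 r * frob H.
Proof.
move=> r0 B1 D1 H1.
have BD : frob (B + D) <= 2 by have := frobD B D; lra.
have in_ball X Y : frob X <= 2 -> frob Y <= 1 -> frob (X + Y) <= 3.
  by move=> X2 Y1; have := frobD X Y; lra.
have B3 : frob B <= 3 by lra.
have -> : second_diff r B D H
    = (normpow r (B + D) - normpow r (B + D + H)) - (normpow r B - normpow r (B + H)).
  exact: subrACA.
apply: le_trans (frobB _ _) _.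
have lip X : frob X <= 2 ->
    frob (normpow r X - normpow r (X + H)) <= (1 + 2 * r) * powR 3 r * frob H.
  move=> X2; have -> : frob H = frob (X - (X + H)) by rewrite opprD addNKr frobN.
  by apply: normpow_lipschitz => //; [lra | exact: in_ball].
by have := lip _ BD; have := lip _ (le_trans B1 (ler1n _ 2)); lra.
Qed.

Lemma bfield_second_diff (p K : R) (Psi : 'M[R]_n) (xi xio G : 'M[R]_(N, n)) :
  bfield p K (xi *m Psi) - bfield p K (xio *m Psi)
    - (bfield p K ((xi + G) *m Psi) - bfield p K ((xio + G) *m Psi))
  = K *: second_diff (p - 2) (xio *m Psi) ((xi - xio) *m Psi) (G *m Psi).
Proof.
have xiE : xi *m Psi = xio *m Psi + (xi - xio) *m Psi by rewrite -mulmxDl addrC subrK.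
rewrite [(xi + G) *m _]mulmxDl [(xio + G) *m _]mulmxDl xiE.
by rewrite /second_diff /normpow /bfield !scalerBr !scalerA.
Qed.

Lemma frob_near1_of_unit B D H :
  frob B ^+ 2 + frob D ^+ 2 + frob H ^+ 2 = 1 -> frob D < 1/16 -> frob H < 1/16 ->
  31/32 <= frob B <= 1.
Proof.
move=> unit D_small H_small.
have := frob_ge0 B; have := frob_ge0 D; have := frob_ge0 H => H0 D0 B0.
have D2 : frob D ^+ 2 <= 1/256 by rewrite expr2; nra.
have H2 : frob H ^+ 2 <= 1/256 by rewrite expr2; nra.
have /andP[l u] : 127/128 <= frob B ^+ 2 <= 1 by apply/andP; split; nra.
by rewrite expr2 in l u; apply/andP; split; nra.
Qed.

Lemma frob_sqr_near1 B X : 31/32 <= frob B <= 1 -> frob (X - B) <= 1/8 ->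
  1/4 <= frob X ^+ 2 <= 9/4 /\ frob X <= 3/2.
Proof.
move=> /andP[lB uB] XB; have := ler_frob_dist X B; rewrite ler_norml => /andP[l u].
by have := frob_ge0 X; rewrite !expr2; split; [apply/andP; split|]; nra.
Qed.

Lemma powR_frob_sqr_lipschitz_near1 (q : R) B X Y : 31/32 <= frob B <= 1 ->
  frob (X - B) <= 1/8 -> frob (Y - B) <= 1/8 ->
  `|powR (frob X ^+ 2) q - powR (frob Y ^+ 2) q| <= 3 * powR_lip q (1/8) 3 * frob (X - Y).
Proof.
move=> hB /(frob_sqr_near1 _ _ hB) [/andP[lX uX] X32] /(frob_sqr_near1 _ _ hB) [/andP[lY uY] Y32].
apply: le_trans (powR_lipschitz_itv q (1/8) 3 _ _ _ _ _) _; try (apply/andP; split); try lra.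
have sqr_dist : `|frob X ^+ 2 - frob Y ^+ 2| <= 3 * frob (X - Y).
  by apply: le_trans (frob_sqr_dist X Y) _; rewrite mulrC ler_wpM2r ?frob_ge0 //; lra.
by apply: le_trans (ler_wpM2l (powR_lip_ge0 _ _ _) sqr_dist) _; rewrite mulrCA mulrA.
Qed.

Lemma powR_frob_sqr_second_diff_near1 (q : R) B D H : 31/32 <= frob B <= 1 ->
  frob D < 1/16 -> frob H < 1/16 ->
  `|powR (frob (B + D) ^+ 2) q - powR (frob B ^+ 2) q
      - (powR (frob (B + D + H) ^+ 2) q - powR (frob (B + H) ^+ 2) q)|
    <= 9 * (`|q| * powR_lip (q - 1) (1/8) 3 + powR_lip q (1/8) 3) * (frob D * frob H).
Proof.
move=> hB D_small H_small; have D0 := frob_ge0 D; have H0 := frob_ge0 H.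
have nB : frob (B - B) <= 1/8 by rewrite subrr frob0; lra.
have nBD : frob (B + D - B) <= 1/8 by rewrite addrAC subrr add0r; lra.
have nBH : frob (B + H - B) <= 1/8 by rewrite addrAC subrr add0r; lra.
have nBDH : frob (B + D + H - B) <= 1/8.
  by rewrite addrAC (addrAC B) subrr add0r; have := frobD D H; lra.
have in_itv X : frob (X - B) <= 1/8 -> 1/8 <= frob X ^+ 2 <= 3.
  by move=> /(frob_sqr_near1 _ _ hB) [/andP[l u] _]; apply/andP; split; lra.
have sqr_dist X Y : frob (X - B) <= 1/8 -> frob (Y - B) <= 1/8 ->
    `|frob X ^+ 2 - frob Y ^+ 2| <= 3 * frob (X - Y).
  move=> /(frob_sqr_near1 _ _ hB) [_ X32] /(frob_sqr_near1 _ _ hB) [_ Y32].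
  by apply: le_trans (frob_sqr_dist X Y) _; rewrite mulrC ler_wpM2r ?frob_ge0 //; lra.
have dH := sqr_dist _ _ nBDH nBD; rewrite (addrC (B + D + H)) addKr in dH.
have dD := sqr_dist _ _ nBD nB; rewrite (addrC (B + D)) addKr in dD.
(* the four squared norms do not form an exact parallelogram: the defect is 2 <D, H> *)
have defect : frob (B + H) ^+ 2 - (frob B ^+ 2 + (frob (B + D + H) ^+ 2 - frob (B + D) ^+ 2))
    = - (2 * mxdot D H) by have := frob_sqr_second_diff B D H; lra.
have /andP[dot_lo dot_hi] : - (2 * (frob D * frob H)) <= 2 * mxdot D H <= 2 * (frob D * frob H).
  by rewrite -ler_norml normrM ger0_norm ?ler_wpM2l ?mxdot_le //; lra.
have shifted : 1/8 <= frob B ^+ 2 + (frob (B + D + H) ^+ 2 - frob (B + D) ^+ 2) <= 3.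
  have [/andP[l u] _] := frob_sqr_near1 _ _ hB nBH.
  by apply/andP; split; nra.
apply: le_trans (powR_second_diff_defect_itv q _ _ _ _ _ _ _ (in_itv _ nBD) (in_itv _ nB)
  (in_itv _ nBDH) (in_itv _ nBH) shifted) _; first lra.
rewrite defect normrN normrM ger0_norm; last lra.
set L1 := powR_lip q _ _; set L2 := _ * powR_lip _ _ _.
have L1_ge0 : 0 <= L1 by exact: powR_lip_ge0.
have L2_ge0 : 0 <= L2 by rewrite mulr_ge0 ?powR_lip_ge0.
have : L2 * `|frob (B + D + H) ^+ 2 - frob (B + D) ^+ 2| * `|frob (B + D) ^+ 2 - frob B ^+ 2|
    <= L2 * (3 * frob H) * (3 * frob D).
  by apply: ler_pM => //; [exact: mulr_ge0 | exact: ler_wpM2l].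
have : L1 * `|mxdot D H| <= L1 * (frob D * frob H) by rewrite ler_wpM2l ?mxdot_le.
have := mulr_ge0 L1_ge0 (mulr_ge0 D0 H0); have := mulr_ge0 L2_ge0 (mulr_ge0 D0 H0).
lra.
Qed.

End Fixed.

Lemma second_diff_near_unit (r : R) : exists2 C : R, 0 <= C &
  forall (N n : nat) (B D H : 'M[R]_(N, n)),
    frob B ^+ 2 + frob D ^+ 2 + frob H ^+ 2 = 1 -> frob D < 1/16 -> frob H < 1/16 ->
    frob (second_diff r B D H) <= C * frob D * frob H.
Proof.
pose q := r / 2; pose L1 := powR_lip q (1/8) 3; pose L2 := `|q| * powR_lip (q - 1) (1/8) 3.
have L1_ge0 : 0 <= L1 by exact: powR_lip_ge0.
have L2_ge0 : 0 <= L2 by rewrite mulr_ge0 ?powR_lip_ge0.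
exists (20 * (L1 + L2)); first by rewrite mulr_ge0 ?addr_ge0.
move=> N n B D H unit D_small H_small.
have D0 := frob_ge0 D; have H0 := frob_ge0 H.
have hB := frob_near1_of_unit _ _ _ unit D_small H_small.
have nB : frob (B - B) <= 1/8 by rewrite subrr frob0; lra.
have nBD : frob (B + D - B) <= 1/8 by rewrite addrAC subrr add0r; lra.
have nBH : frob (B + H - B) <= 1/8 by rewrite addrAC subrr add0r; lra.
have nBDH : frob (B + D + H - B) <= 1/8.
  by rewrite addrAC (addrAC B) subrr add0r; have := frobD D H; lra.
pose f (X : 'M[R]_(N, n)) := powR (frob X ^+ 2) q.
have -> : second_diff r B D H = (f (B + D) - f B - (f (B + D + H) - f (B + H))) *: (B + D)
    + (f B - f (B + H)) *: D - (f (B + D + H) - f (B + H)) *: H.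
  by rewrite /second_diff /normpow /f !(powR_sqr_half _ r (frob_ge0 _)) scaler_second_diffE.
have T1 := powR_frob_sqr_second_diff_near1 q _ _ _ hB D_small H_small.
have T2 := powR_frob_sqr_lipschitz_near1 q _ _ _ hB nB nBH.
rewrite opprD addNKr frobN in T2.
have T3 := powR_frob_sqr_lipschitz_near1 q _ _ _ hB nBDH nBH.
rewrite (_ : B + D + H - (B + H) = D) in T3; last by rewrite (addrAC B D H) addrC addrK.
rewrite -/L1 -/L2 -/(f _) in T1 T2 T3.
apply: le_trans (frobB _ _) _; apply: le_trans (lerD (frobD _ _) (lexx _)) _.
rewrite !frobZ.
have [_ BD32] := frob_sqr_near1 _ _ hB nBD.
have : `|f (B + D) - f B - (f (B + D + H) - f (B + H))| * frob (B + D)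
    <= 9 * (L2 + L1) * (frob D * frob H) * (3/2) by rewrite ler_pM ?frob_ge0.
have : `|f B - f (B + H)| * frob D <= 3 * L1 * frob H * frob D by rewrite ler_wpM2r.
have : `|f (B + D + H) - f (B + H)| * frob H <= 3 * L1 * frob D * frob H by rewrite ler_wpM2r.
have := mulr_ge0 L1_ge0 (mulr_ge0 D0 H0); have := mulr_ge0 L2_ge0 (mulr_ge0 D0 H0).
lra.
Qed.

Lemma second_diff_unit (r : R) : 0 <= r -> exists2 C : R, 0 <= C &
  forall (N n : nat) (B D H : 'M[R]_(N, n)),
    frob B ^+ 2 + frob D ^+ 2 + frob H ^+ 2 = 1 ->
    frob (second_diff r B D H) <= C * frob D * frob H.
Proof.
move=> r0; have [C0 C0_ge0 near_unit] := second_diff_near_unit r.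
pose C1 := 32 * (1 + 2 * r) * powR 3 r.
have C1_ge0 : 0 <= C1 by rewrite !mulr_ge0 ?powR_ge0 //; lra.
exists (C1 + C0); first exact: addr_ge0.
move=> N n B D H unit.
have B0 := frob_ge0 B; have D0 := frob_ge0 D; have H0 := frob_ge0 H.
have [B1 D1 H1] : [/\ frob B <= 1, frob D <= 1 & frob H <= 1].
  by move: unit; rewrite !expr2 => unit; split; nra.
have C_DH : C1 * frob D * frob H <= (C1 + C0) * frob D * frob H.
  by apply: (ler_wpM2r H0); apply: (ler_wpM2r D0); rewrite lerDl.
have large (X Y : 'M[R]_(N, n)) : 1/16 <= frob Y ->
    2 * (1 + 2 * r) * powR 3 r * frob X <= C1 * frob Y * frob X.
  move=> Y_big; apply: (ler_wpM2r (frob_ge0 X)).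
  have : 0 <= (1 + 2 * r) * powR 3 r by rewrite mulr_ge0 ?powR_ge0 //; lra.
  by rewrite /C1; nra.
have [D_big|D_small] := leP (1/16) (frob D).
  exact: le_trans (second_diff_le_lipschitz _ _ _ _ r0 B1 D1 H1) (le_trans (large _ _ D_big) C_DH).
have [H_big|H_small] := leP (1/16) (frob H).
  rewrite second_diffC; apply: le_trans (second_diff_le_lipschitz _ _ _ _ r0 B1 H1 D1) _.
  by apply: le_trans (large _ _ H_big) _; rewrite mulrAC.
apply: le_trans (near_unit _ _ _ _ _ unit D_small H_small) _.
by apply: (ler_wpM2r H0); apply: (ler_wpM2r D0); rewrite lerDr.
Qed.

Lemma second_diff_bound (r : R) : 0 <= r -> exists2 C : R, 0 <= C &
  forall (N n : nat) (B D H : 'M[R]_(N, n)),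
    frob (second_diff r B D H)
      <= C * frob D * frob H * powR (frob B ^+ 2 + frob D ^+ 2 + frob H ^+ 2) ((r - 1) / 2).
Proof.
move=> r0; have [C C_ge0 unit_bound] := second_diff_unit r r0.
exists C => // N n B D H.
have [->|H_neq0] := eqVneq H 0; first by rewrite second_diff0 !frob0 mulr0 mul0r.
set M := _ + _ + frob H ^+ 2.
have M_gt0 : 0 < M.
  have : 0 < frob H ^+ 2 by rewrite exprn_gt0 // frob_gt0.
  by have := sqr_ge0 (frob B); have := sqr_ge0 (frob D); rewrite /M; lra.
pose m := Num.sqrt M; have m_gt0 : 0 < m by rewrite sqrtr_gt0.
have unit : frob (m^-1 *: B) ^+ 2 + frob (m^-1 *: D) ^+ 2 + frob (m^-1 *: H) ^+ 2 = 1.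
  rewrite !frobZ gtr0_norm ?invr_gt0 // !exprMn -!mulrDr -/M exprVn sqr_sqrtr ?ltW //.
  by rewrite mulVf // gt_eqF.
have -> : second_diff r B D H
    = powR m (r + 1) *: second_diff r (m^-1 *: B) (m^-1 *: D) (m^-1 *: H).
  by rewrite -second_diffZ // !scalerA mulfV ?gt_eqF // !scale1r.
rewrite frobZ gtr0_norm ?powR_gt0 //.
have := unit_bound _ _ _ _ _ unit; rewrite !frobZ gtr0_norm ?invr_gt0 // => bound.
have -> : powR M ((r - 1) / 2) = powR m (r - 1) by rewrite [RHS]powR_sqr_half ?sqr_sqrtr ?ltW.
have -> : powR m (r + 1) = powR m (r - 1) * m ^+ 2.
  rewrite -powR_mulrn ?ltW // -powRD; first by congr powR; ring.
  by apply/implyP => _; rewrite gt_eqF.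
have -> : C * frob D * frob H * powR m (r - 1)
    = powR m (r - 1) * m ^+ 2 * (C * (m^-1 * frob D) * (m^-1 * frob H)).
  by field; rewrite gt_eqF.
by rewrite ler_wpM2l // mulr_ge0 ?powR_ge0 ?sqr_ge0.
Qed.

End SecondDifference.

Theorem lemma3p14 (R : realType) (p K : R) (hp : 2 <= p) (hK : 0 < K) :
  exists c : R -> R -> R,
  forall (N n : nat) (Psi : 'M[R]_n) (xi xio G : 'M[R]_(N, n)),
    Psi \in unitmx ->
    frob (bfield p K (xi *m Psi) - bfield p K (xio *m Psi)
          - (bfield p K ((xi + G) *m Psi) - bfield p K ((xio + G) *m Psi)))
    <= c (frob Psi) (frob (invmx Psi)) * frob G
       * powR (frob xio ^+ 2 + frob (xi - xio) ^+ 2 + frob G ^+ 2) ((p - 3) / 2)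
       * frob (xi - xio).
Proof.
have := second_diff_bound (p - 2); rewrite subr_ge0 => /(_ hp) [C C_ge0 bound].
pose e := (p - 3) / 2.
exists (fun a b => K * C * a ^+ 2 * (powR (a ^+ 2) e + powR (b ^+ 2) (- e))).
move=> N n Psi xi xio G Psi_unit.
rewrite bfield_second_diff frobZ gtr0_norm //.
have [->|G_neq0] := eqVneq G 0; first by rewrite mul0mx second_diff0 !frob0 !(mulr0, mul0r).
have := bound _ _ (xio *m Psi) ((xi - xio) *m Psi) (G *m Psi).
rewrite (_ : (p - 2 - 1) / 2 = e); last by rewrite /e; congr (_ / _); ring.
move=> second_diff_le.
rewrite -/e (_ : K * C * _ * _ * _ * _ * _ = K * (C * (frob (xi - xio) * frob Psi)
  * (frob G * frob Psi) * ((powR (frob Psi ^+ 2) e + powR (frob (invmx Psi) ^+ 2) (- e))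
  * powR (frob xio ^+ 2 + frob (xi - xio) ^+ 2 + frob G ^+ 2) e))); last by ring.
apply: (ler_wpM2l (ltW hK)); apply: le_trans second_diff_le _.
apply: ler_pM (mulr_ge0 (mulr_ge0 C_ge0 (frob_ge0 _)) (frob_ge0 _)) (powR_ge0 _ _) _
  (powR_sum3_frob_mulmx_le e _ _ _ _ Psi_unit G_neq0).
apply: ler_pM (mulr_ge0 C_ge0 (frob_ge0 _)) (frob_ge0 _) _ (frob_mulmx G Psi).
by apply: (ler_wpM2l C_ge0); exact: frob_mulmx.
Qed.
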